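(* Let $M=\langle W,\leq,R,V\rangle$ be a brIML1-model, let $\gamma$ be a formula such that $w\nVdash\gamma$ for some $w\in W$, and let $\Sigma$ be the set of all subformulas of $\gamma$. Then the filtered frame $F_\Sigma=\langle W_\Sigma,\leq_\Sigma,R_\Sigma\rangle$ is a (well-defined) brIML1-frame.
   Context: Formulas are built from a denumerable set $PV$ of propositional variables and $\bot$ using $\land,\lor,\rightarrow$ and unary $\Delta$. A brIML1-frame is a triple $\langle W,\leq,R\rangle$, $W$ non-empty, $\leq$ a partial order on $W$, $R$ a binary relation with (1) $w\leq v\Rightarrow wRv$ and (2) ($w\leq v$ and $vRu$) $\Rightarrow wRu$. A brIML1-model adds $V:PV\to P(W)$ upward closed under $\leq$; forcing: atoms via $V$, $\bot$ never, $\land,\lor$ pointwise, $w\Vdash\varphi\rightarrow\psi$ iff every $v\geq w$ has $v\nVdash\varphi$ or $v\Vdash\psi$, $w\Vdash\Delta\varphi$ iff every $v$ with $wRv$ has $v\Vdash\varphi$. Filtration: $w\sim v$ iff $w$ and $v$ force the same formulas of $\Sigma$; $[w]$ is the class of $w$; $W_\Sigma=\{[w]:w\in W\}$; $[w]\leq_\Sigma[v]$ iff for every $\alpha\in\Sigma$, $w\Vdash\alpha$ implies $v\Vdash\alpha$; $[w]R_\Sigma[v]$ iff for every formula $\Delta\beta\in\Sigma$, $w\Vdash\Delta\beta$ implies $v\Vdash\beta$. *)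

From Stdlib Require Import Classical.
Set Implicit Arguments.

Inductive form : Type :=
| Var : nat -> form
| Bot : form
| And : form -> form -> form
| Or : form -> form -> form
| Imp : form -> form -> form
| Delta : form -> form.

Inductive subf : form -> form -> Prop :=
| subf_refl : forall g, subf g g
| subf_andl : forall a b g, subf (And a b) g -> subf a g
| subf_andr : forall a b g, subf (And a b) g -> subf b g
| subf_orl : forall a b g, subf (Or a b) g -> subf a g
| subf_orr : forall a b g, subf (Or a b) g -> subf b g
| subf_impl : forall a b g, subf (Imp a b) g -> subf a g
| subf_impr : forall a b g, subf (Imp a b) g -> subf b g
| subf_delta : forall a g, subf (Delta a) g -> subf a g.

(* brIML1-frame: W non-empty, le a partial order, (1) le ⊆ R, (2) le;R ⊆ R *)
Definition brIML1_frame (W : Type) (le R : W -> W -> Prop) : Prop :=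
  inhabited W /\
  (forall w, le w w) /\
  (forall w v u, le w v -> le v u -> le w u) /\
  (forall w v, le w v -> le v w -> w = v) /\
  (forall w v, le w v -> R w v) /\
  (forall w v u, le w v -> R v u -> R w u).

Definition brIML1_model (W : Type) (le R : W -> W -> Prop) (V : nat -> W -> Prop)
  : Prop :=
  brIML1_frame le R /\ (forall p w v, V p w -> le w v -> V p v).

Fixpoint forces (W : Type) (le R : W -> W -> Prop) (V : nat -> W -> Prop)
  (w : W) (f : form) : Prop :=
  match f with
  | Var p => V p w
  | Bot => False
  | And a b => forces le R V w a /\ forces le R V w b
  | Or a b => forces le R V w a \/ forces le R V w b
  | Imp a b => forall v, le w v -> ~ forces le R V v a \/ forces le R V v b
  | Delta a => forall v, R w v -> forces le R V v a
  end.

Section Filtration.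
Variables (W : Type) (le R : W -> W -> Prop) (V : nat -> W -> Prop) (g : form).

Definition cls (w : W) : W -> Prop :=
  fun v => forall a, subf a g -> (forces le R V w a <-> forces le R V v a).

Definition WS : Type := { C : W -> Prop | exists w, C = cls w }.

Definition leS (X Y : WS) : Prop :=
  exists w v, proj1_sig X = cls w /\ proj1_sig Y = cls v /\
    (forall a, subf a g -> forces le R V w a -> forces le R V v a).

Definition RS (X Y : WS) : Prop :=
  exists w v, proj1_sig X = cls w /\ proj1_sig Y = cls v /\
    (forall b, subf (Delta b) g -> forces le R V w (Delta b) -> forces le R V v b).

End Filtration.

From Pilot Require Import Defs.
From Stdlib Require Import FunctionalExtensionality PropExtensionality ProofIrrelevance.
Set Implicit Arguments.

(* Worlds in the same class force the same formulas of Sigma, so [<=_Sigma]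
   and [R_Sigma] may be checked on any representatives.  Reflexivity and
   transitivity of [<=_Sigma] and the frame conditions then transfer from M:
   for (1), [w R w] gives [w ||- b] from [w ||- Delta b], and [b] is again in
   Sigma; for (2), push [Delta b] along [<=_Sigma] first.  Antisymmetry holds
   because mutually [<=_Sigma]-related worlds are equivalent, so their classes
   coincide as predicates. *)

Section Filtration.
Variables (W : Type) (le R : W -> W -> Prop) (V : nat -> W -> Prop) (g : form).

Local Notation "w ||- a" := (forces le R V w a) (at level 70).
Local Notation cls := (Defs.cls le R V g).
Local Notation WS := (Defs.WS le R V g).
Local Notation leS := (@Defs.leS W le R V g).
Local Notation RS := (@Defs.RS W le R V g).

Lemma cls_self (w : W) : cls w w.
Proof. intros a _; tauto. Qed.

Lemma cls_eq_forces_iff (w v : W) :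
  cls w = cls v -> forall a, subf a g -> (w ||- a <-> v ||- a).
Proof.
  intros E a Ha.
  assert (Hv : cls w v) by (rewrite E; apply cls_self).
  exact (Hv a Ha).
Qed.

Lemma forces_iff_cls_eq (w v : W) :
  (forall a, subf a g -> (w ||- a <-> v ||- a)) -> cls w = cls v.
Proof.
  intros Agree. extensionality u. apply propositional_extensionality.
  split; intros Hu a Ha; specialize (Agree a Ha); specialize (Hu a Ha); tauto.
Qed.

Lemma WS_eq (X Y : WS) : proj1_sig X = proj1_sig Y -> X = Y.
Proof. apply eq_sig_hprop. intros; apply proof_irrelevance. Qed.

Lemma leS_reps (X Y : WS) (w v : W) :
  leS X Y -> proj1_sig X = cls w -> proj1_sig Y = cls v ->
  forall a, subf a g -> w ||- a -> v ||- a.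
Proof.
  intros [w' [v' [Xw' [Yv' Hle]]]] Xw Yv a Ha Hw.
  apply (cls_eq_forces_iff (eq_trans (eq_sym Yv') Yv) Ha).
  apply Hle; [exact Ha|].
  exact (proj2 (cls_eq_forces_iff (eq_trans (eq_sym Xw') Xw) Ha) Hw).
Qed.

Lemma RS_reps (X Y : WS) (w v : W) :
  RS X Y -> proj1_sig X = cls w -> proj1_sig Y = cls v ->
  forall b, subf (Delta b) g -> w ||- Delta b -> v ||- b.
Proof.
  intros [w' [v' [Xw' [Yv' HR]]]] Xw Yv b Hb Hw.
  apply (cls_eq_forces_iff (eq_trans (eq_sym Yv') Yv) (subf_delta Hb)).
  apply HR; [exact Hb|].
  exact (proj2 (cls_eq_forces_iff (eq_trans (eq_sym Xw') Xw) Hb) Hw).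
Qed.

Lemma WS_inhabited : inhabited W -> inhabited WS.
Proof. intros [w]. constructor. exists (cls w). exists w. reflexivity. Qed.

Lemma leS_refl (X : WS) : leS X X.
Proof. destruct X as [C [w ->]]. exists w, w. auto. Qed.

Lemma leS_trans (X Y Z : WS) : leS X Y -> leS Y Z -> leS X Z.
Proof.
  destruct X as [C1 [w ->]], Y as [C2 [v ->]], Z as [C3 [u ->]].
  intros HXY HYZ. exists w, u. do 2 (split; [reflexivity|]).
  intros a Ha Hw.
  apply (leS_reps HYZ eq_refl eq_refl Ha), (leS_reps HXY eq_refl eq_refl Ha), Hw.
Qed.

Lemma leS_antisym (X Y : WS) : leS X Y -> leS Y X -> X = Y.
Proof.
  destruct X as [C1 [w ->]], Y as [C2 [v ->]].
  intros HXY HYX. apply WS_eq, forces_iff_cls_eq. intros a Ha. split.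
  - exact (leS_reps HXY eq_refl eq_refl Ha).
  - exact (leS_reps HYX eq_refl eq_refl Ha).
Qed.

Lemma leS_sub_RS :
  (forall w, le w w) -> (forall w v, le w v -> R w v) ->
  forall X Y : WS, leS X Y -> RS X Y.
Proof.
  intros le_refl le_sub_R X Y [w [v [Xw [Yv Hle]]]].
  exists w, v. do 2 (split; [assumption|]).
  intros b Hb Hw. apply Hle; [exact (subf_delta Hb)|].
  apply Hw, le_sub_R, le_refl.
Qed.

Lemma leS_RS_comp (X Y Z : WS) : leS X Y -> RS Y Z -> RS X Z.
Proof.
  destruct X as [C1 [w ->]], Y as [C2 [v ->]], Z as [C3 [u ->]].
  intros HXY HYZ. exists w, u. do 2 (split; [reflexivity|]).
  intros b Hb Hw.
  apply (RS_reps HYZ eq_refl eq_refl Hb), (leS_reps HXY eq_refl eq_refl Hb), Hw.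
Qed.

End Filtration.

Theorem theorem5p3 (W : Type) (le R : W -> W -> Prop) (V : nat -> W -> Prop)
  (g : form) :
  brIML1_model le R V ->
  (exists w : W, ~ forces le R V w g) ->
  brIML1_frame (@leS W le R V g) (@RS W le R V g).
Proof.
  intros [[HW [le_refl [_ [_ [le_sub_R _]]]]] _] _.
  split; [|repeat split].
  - exact (WS_inhabited le R V g HW).
  - apply leS_refl.
  - apply leS_trans.
  - apply leS_antisym.
  - apply leS_sub_RS; assumption.
  - apply leS_RS_comp.
Qed.
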